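(* Let $A$ be a row-finite $\omega\times\omega$ complex matrix with infinite deficiency, and let $H=(h_{ij})=QA$ be a quasi-Hermite form of $A$ ($Q$ nonsingular row-finite). Let $j_0<j_1<\cdots$ index the nonzero rows of $H$, $\mu_n=\ell(H_{j_n})$, and $S=\omega\setminus\{\mu_0,\mu_1,\dots\}=\{s_0<s_1<\cdots\}$. For $s\in S$ define $\xi^{(s)}\in\mathbb{C}^\omega$ by $\xi^{(s)}_s=1$, $\xi^{(s)}_{\mu_n}=-h_{j_n s}$ for all $n$, and $\xi^{(s)}_t=0$ for $t\in S\setminus\{s\}$. Then $\{\xi^{(s_k)}\}_{k\in\omega}$ is a Schauder basis of $RNS(A)=\{y\in\mathbb{C}^\omega: Ay=0\}$ regarded as a subspace of the Fréchet space $\mathfrak{s}$: every $x\in RNS(A)$ satisfies $x=\sum_{k=0}^{\infty}x_{s_k}\xi^{(s_k)}$ with convergence in $\mathfrak{s}$, and if $x=\sum_{k=0}^\infty z_k\xi^{(s_k)}$ in $\mathfrak{s}$ for some scalars $z_k$, then $z_k=x_{s_k}$ for all $k$.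
   Context: $\omega=\{0,1,2,\dots\}$; $\mathbb{C}^\omega$ is the space of all complex sequences; $(Ay)_n=\sum_k a_{nk}y_k$. $\mathfrak{s}$ denotes $\mathbb{C}^\omega$ with the metric $\varrho(q,p)=\sum_{i\ge0}2^{-i}\frac{|q_i-p_i|}{1+|q_i-p_i|}$ (coordinatewise convergence). Row-finite: finitely many nonzero entries per row; nonsingular: invertible in the algebra of row-finite matrices. Length $\ell(x)$ of a finitely supported $x\neq0$: largest index of a nonzero coordinate. Quasi-Hermite form: with $J$ the indices of nonzero rows and $\ell_j=\ell(H_j)$, (i) $j<j'$ in $J$ implies $\ell_j<\ell_{j'}$; (ii) $h_{j\ell_j}=1$; (iii) $h_{m\ell_j}=0$ for all $m\neq j$. Deficiency: codimension of the row space of $A$ in the space of finitely supported sequences; it equals $\operatorname{card}(S)$. *)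

(* Complex scalars: an arbitrary numClosedFieldType C
   (an algebraically closed field with conjugation and norm, the MathComp
   abstraction of the complex numbers). *)
From HB Require Import structures.
From mathcomp Require Import all_boot all_order all_algebra.
Set Implicit Arguments. Unset Strict Implicit. Unset Printing Implicit Defensive.
Import Order.TTheory GRing.Theory Num.Theory.
Local Open Scope ring_scope.

Section Defs.
Variable C : numClosedFieldType.

Definition omat := nat -> nat -> C.
Definition oseq := nat -> C.

Definition supp_below (x : oseq) (N : nat) : Prop := forall k, (N <= k)%N -> x k = 0.
Definition fin_supp (x : oseq) : Prop := exists N, supp_below x N.

Definition row_finite (A : omat) : Prop := forall i, fin_supp (A i).

Definition mulv_at (A : omat) (y : oseq) (n : nat) (v : C) : Prop :=
  exists N, supp_below (A n) N /\ v = \sum_(k < N) A n k * y k.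

Definition RNS (A : omat) (y : oseq) : Prop := forall n, mulv_at A y n 0.

Definition is_prod (P M N : omat) : Prop :=
  forall i j, exists K, supp_below (M i) K /\ P i j = \sum_(k < K) M i k * N k j.

Definition idm : omat := fun i j => if i == j then 1 else 0.

Definition nonsingular (Q : omat) : Prop :=
  row_finite Q /\ exists R, row_finite R /\ is_prod idm R Q /\ is_prod idm Q R.

Definition is_length (x : oseq) (l : nat) : Prop :=
  x l != 0 /\ forall k, (l < k)%N -> x k = 0.

Definition quasi_hermite (H : omat) : Prop :=
  row_finite H /\
  forall j lj, is_length (H j) lj ->
    [/\ H j lj = 1,
        (forall m, m <> j -> H m lj = 0) &
        (forall j' lj', (j < j')%N -> is_length (H j') lj' -> (lj < lj')%N)].

Definition in_row_space (A : omat) (x : oseq) : Prop :=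
  exists (N : nat) (d : nat -> C), forall k, x k = \sum_(i < N) d i * A i k.

Definition infinite_deficiency (A : omat) : Prop :=
  forall n : nat, exists v : 'I_n -> oseq,
    (forall i, fin_supp (v i)) /\
    forall c : 'I_n -> C,
      in_row_space A (fun k => \sum_(i < n) c i * v i k) -> forall i, c i = 0.

Definition cvg (u : nat -> C) (l : C) : Prop :=
  forall eps : C, 0 < eps -> exists N, forall n, (N <= n)%N -> `|u n - l| < eps.

(* convergence in the Frechet space s = coordinatewise convergence *)
Definition cvg_s (u : nat -> oseq) (x : oseq) : Prop :=
  forall t, cvg (fun n => u n t) (x t).

End Defs.

(* Premultiplying by the nonsingular row-finite Q does not change the right
   null space, so RNS(A) = RNS(H).  In the quasi-Hermite form every nonzero
   row j has its pivot 1 at mu_j, no other row meets column mu_j, and S is the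
   complement of the pivot columns; hence H y = 0 says exactly that
   y_{mu_j} = - sum_(s in S) h_{j s} y_s, a finite sum since row j vanishes
   beyond mu_j.  The free coordinates y_s (s in S) thus determine y, each
   xi^(s) is the solution with y = delta_s on S, and in every coordinate the
   partial sums of sum_k x_{s_k} xi^(s_k) are eventually equal to x: at s_m
   once k > m, at mu_j once the sum has passed all s_k <= mu_j.  Uniqueness of
   the coefficients follows by reading off coordinate s_k. *)

From HB Require Import structures.
From mathcomp Require Import all_boot all_order all_algebra.
From Stdlib Require Import Classical.
Import Order.TTheory GRing.Theory Num.Theory.
Local Open Scope ring_scope.

Set Implicit Arguments. Unset Strict Implicit.

Section OmegaSequences.
Variable C : numClosedFieldType.
Implicit Types (A M N P Q R : omat C) (a y : oseq C).

Definition dot a y (K : nat) : C := \sum_(k < K) a k * y k.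

Lemma supp_below_widen a K K' : supp_below a K -> (K <= K')%N -> supp_below a K'.
Proof. by move=> ha leKK' k hk; apply: ha; apply: leq_trans hk. Qed.

Lemma supp_below_rows (b : nat -> oseq C) L :
  (forall l, (l < L)%N -> fin_supp (b l)) ->
  exists K, forall l, (l < L)%N -> supp_below (b l) K.
Proof.
elim: L => [|L IH] hb; first by exists 0%N.
have [K hK] := IH (fun l hl => hb l (ltnW hl)).
have [K' hK'] := hb L (ltnSn L).
exists (maxn K K') => l; rewrite ltnS leq_eqVlt => /predU1P[->|hl].
  exact: supp_below_widen hK' (leq_maxr _ _).
exact: supp_below_widen (hK l hl) (leq_maxl _ _).
Qed.

Lemma dot_widen a y K K' : supp_below a K -> (K <= K')%N -> dot a y K' = dot a y K.
Proof.
move=> ha leKK'; rewrite /dot -(subnKC leKK') big_split_ord /=.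
by rewrite [X in _ + X]big1 ?addr0 // => k _; rewrite ha ?mul0r ?leq_addr.
Qed.

Lemma dot_supp_below a y K K' :
  supp_below a K -> supp_below a K' -> dot a y K = dot a y K'.
Proof.
move=> ha ha'.
by rewrite -(dot_widen y ha (leq_maxl K K')) -(dot_widen y ha' (leq_maxr K K')).
Qed.

Lemma dot_lincomb (b : nat -> oseq C) (c : nat -> C) L y K :
  dot (fun m => \sum_(l < L) c l * b l m) y K = \sum_(l < L) c l * dot (b l) y K.
Proof.
rewrite /dot; under eq_bigr => m _ do rewrite mulr_suml.
rewrite exchange_big /=; apply: eq_bigr => l _.
by rewrite mulr_sumr; apply: eq_bigr => m _; rewrite mulrA.
Qed.

Lemma mulv_at_dot M y n v K : mulv_at M y n v -> supp_below (M n) K -> dot (M n) y K = v.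
Proof. by move=> [K' [hK' ->]] hK; apply: dot_supp_below. Qed.

Lemma is_prod_dot P M N i j K :
  is_prod P M N -> supp_below (M i) K -> P i j = dot (M i) (fun k => N k j) K.
Proof. by move=> hP hK; have [K' [hK' ->]] := hP i j; apply: dot_supp_below. Qed.

Lemma is_prod_supp_below P M N n K L :
  is_prod P M N -> supp_below (M n) K ->
  (forall l, (l < K)%N -> supp_below (N l) L) -> supp_below (P n) L.
Proof.
move=> hP hK hN j hj; rewrite (is_prod_dot j hP hK) /dot big1 // => l _.
by rewrite hN ?mulr0.
Qed.

Lemma is_prod_row_finite P M N : row_finite M -> row_finite N -> is_prod P M N -> row_finite P.
Proof.
move=> rfM rfN hP n; have [K hK] := rfM n.
have [L hL] := supp_below_rows (L := K) (fun l _ => rfN l).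
by exists L; apply: is_prod_supp_below hP hK hL.
Qed.

Lemma RNS_is_prod P M N y :
  row_finite M -> row_finite N -> is_prod P M N -> RNS N y -> RNS P y.
Proof.
move=> rfM rfN hP hy n; have [K hK] := rfM n.
have [L hL] := supp_below_rows (L := K) (fun l _ => rfN l).
exists L; split; first exact: is_prod_supp_below hP hK hL.
symmetry; transitivity (dot (fun m => \sum_(l < K) M n l * N l m) y L).
  by apply: eq_bigr => m _; rewrite (is_prod_dot m hP hK).
rewrite dot_lincomb big1 // => l _.
by rewrite (mulv_at_dot (hy l) (hL l (ltn_ord l))) mulr0.
Qed.

Lemma is_prod_idml A : is_prod A (idm C) A.
Proof.
move=> i j; exists i.+1; split.
  by move=> k hk; rewrite /idm; case: eqP => // ei; rewrite ei ltnn in hk.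
rewrite (bigD1 (Ordinal (ltnSn i))) //= /idm eqxx mul1r big1 ?addr0 // => k hk.
by case: eqP => [ei|_]; [rewrite -val_eqE /= -ei eqxx in hk | rewrite mul0r].
Qed.

Lemma is_prod_mulA X P R Q M A :
  row_finite Q -> is_prod P R Q -> is_prod M Q A -> is_prod X P A -> is_prod X R M.
Proof.
move=> rfQ hP hM hX i j.
have [KR [hKR _]] := hP i 0%N; have [KP [hKP _]] := hX i j.
have [KQ hKQ] := supp_below_rows (L := KR) (fun l _ => rfQ l).
exists KR; split => //.
pose K := maxn KP KQ.
rewrite (is_prod_dot j hX hKP) -(dot_widen _ hKP (leq_maxl KP KQ)).
transitivity (dot (fun k => \sum_(l < KR) R i l * Q l k) (fun k => A k j) K).
  by apply: eq_bigr => k _; rewrite (is_prod_dot k hP hKR).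
rewrite dot_lincomb; apply: eq_bigr => l _; congr (_ * _).
by rewrite (is_prod_dot j hM (supp_below_widen (hKQ l (ltn_ord l)) (leq_maxr KP KQ))).
Qed.

Lemma RNS_nonsingular A Q H y :
  row_finite A -> nonsingular Q -> is_prod H Q A -> RNS A y <-> RNS H y.
Proof.
move=> rfA [rfQ [R [rfR [hRQ _]]]] hH.
have rfH : row_finite H := is_prod_row_finite rfQ rfA hH.
split; first exact: RNS_is_prod rfQ rfA hH.
apply: RNS_is_prod rfR rfH _.
exact: is_prod_mulA rfQ hRQ hH (is_prod_idml A).
Qed.

Lemma is_length_uniq a l l' :
  is_length a l -> is_length a l' -> l = l'.
Proof.
move=> [al a_gt] [al' a_gt']; case: (ltngtP l l') => // hl.
  by rewrite a_gt ?eqxx in al'.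
by rewrite a_gt' ?eqxx in al.
Qed.

Lemma supp_below_length a K :
  supp_below a K -> a =1 (fun=> 0) \/ exists l, is_length a l.
Proof.
elim: K => [|K IH] ha; first by left => k; apply: ha.
have [aK0|aK] := eqVneq (a K) 0; last by right; exists K.
by apply: IH => k; rewrite leq_eqVlt => /predU1P[<-|]; last exact: ha.
Qed.

Lemma sum_delta (F d : nat -> C) m n :
  (m < n)%N -> d m = 1 -> (forall k, k <> m -> d k = 0) ->
  \sum_(k < n) F k * d k = F m.
Proof.
move=> hm dm1 d0; rewrite (bigD1 (Ordinal hm)) //= dm1 mulr1 big1 ?addr0 // => k hk.
by rewrite d0 ?mulr0 // => ek; rewrite -val_eqE /= ek eqxx in hk.
Qed.

Lemma cvg_eventually (u : nat -> C) l :
  (exists K, forall n, (K <= n)%N -> u n = l) -> cvg u l.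
Proof. by move=> [K hK] eps eps_gt0; exists K => n hn; rewrite hK // subrr normr0. Qed.

Lemma cvg_eventually_uniq (u : nat -> C) l c :
  cvg u l -> (exists K, forall n, (K <= n)%N -> u n = c) -> c = l.
Proof.
move=> hu [K hK]; apply/eqP; rewrite -subr_eq0; apply/negPn/negP => hcl.
have [M hM] := hu `|c - l| (ltac:(by rewrite normr_gt0)).
by have := hM (maxn K M) (leq_maxr _ _); rewrite hK ?leq_maxl // ltxx.
Qed.

End OmegaSequences.

Section QuasiHermiteNullSpace.
Variables (C : numClosedFieldType) (H : omat C) (s : nat -> nat).
Hypothesis qhH : quasi_hermite H.
Hypothesis s_incr : forall k, (s k < s k.+1)%N.
Hypothesis s_compl : forall t, (exists k, s k = t) <-> ~ (exists j, is_length (H j) t).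

Lemma leq_s k : (k <= s k)%N.
Proof. by elim: k => // k IH; apply: leq_ltn_trans IH (s_incr k). Qed.

Lemma s_inj : injective s.
Proof.
have s_mono := homo_ltn ltn_trans s_incr.
by move=> k k' ek; case: (ltngtP k k') => // /s_mono; rewrite ek ltnn.
Qed.

Lemma s_not_length j k : ~ is_length (H j) (s k).
Proof. by move=> hl; apply: (s_compl (s k)).1; [exists k | exists j]. Qed.

Lemma s_or_length t : (exists k, s k = t) \/ (exists j, is_length (H j) t).
Proof.
case: (classic (exists k, s k = t)) => [|not_s]; [by left | right].
by apply: NNPP => no_len; apply/not_s/s_compl.
Qed.

Lemma pivot_eq1 j l : is_length (H j) l -> H j l = 1.
Proof. by move=> hl; case: (qhH.2 j l hl). Qed.

Lemma pivot_col_eq0 j j' l : is_length (H j') l -> j <> j' -> H j l = 0.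
Proof. by move=> hl ne; case: (qhH.2 j' l hl) => _ ->. Qed.

(* Row [j] of [H] vanishes off [S] except at its pivot [l]; all the [s k]
   with [k >= n > l] lie beyond [l]. *)
Lemma quasi_hermite_row_term j l n u y : is_length (H j) l -> (l < n)%N -> (u <= l)%N ->
  H j u * y u = (if u == l then y l else 0) +
                \sum_(k < n) (if u == s k then H j (s k) * y (s k) else 0).
Proof.
move=> hl ln ul; have [-> | ne_ul] := eqVneq u l.
  rewrite pivot_eq1 // mul1r big1 ?addr0 // => k _.
  by case: eqP => // el; rewrite el in hl; case: (s_not_length hl).
rewrite add0r; case: (s_or_length u) => [[m su] | [j' hj']].
  subst u.
  rewrite (eq_bigr (fun k : 'I_n => if (k : nat) == m then H j (s k) * y (s k) else 0)).
    by rewrite -big_mkcond (big_ord1_eq _ (fun k => H j (s k) * y (s k)))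
      (leq_ltn_trans (leq_s m) (leq_ltn_trans ul ln)).
  by move=> k _; rewrite (inj_eq s_inj) eq_sym.
have ne_jj' : j <> j'.
  by move=> ej; rewrite ej in hl; rewrite (is_length_uniq hl hj') eqxx in ne_ul.
rewrite (pivot_col_eq0 hj' ne_jj') mul0r big1 // => k _.
by case: eqP => // eu; rewrite eu in hj'; case: (s_not_length hj').
Qed.

Lemma dot_quasi_hermite_row j l n y : is_length (H j) l -> (l < n)%N ->
  dot (H j) y l.+1 = y l + \sum_(k < n) H j (s k) * y (s k).
Proof.
move=> hl ln; rewrite /dot.
under eq_bigr => u _ do rewrite (quasi_hermite_row_term y hl ln (ltn_ord u : (u < l.+1)%N)).
rewrite big_split /= -big_mkcond (big_ord1_eq _ (fun=> y l)) ltnSn; congr (_ + _).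
rewrite exchange_big /=; apply: eq_bigr => k _.
rewrite -big_mkcond (big_ord1_eq _ (fun=> H j (s k) * y (s k))); case: ltnP => // lsk.
by rewrite hl.2 ?mul0r.
Qed.

Lemma RNS_quasi_hermite_length y j l n : RNS H y -> is_length (H j) l -> (l < n)%N ->
  y l = - \sum_(k < n) H j (s k) * y (s k).
Proof.
move=> hy hl ln; apply/eqP; rewrite -addr_eq0 -(dot_quasi_hermite_row y hl ln).
by rewrite (mulv_at_dot (hy j)) // => k; apply: hl.2.
Qed.

Lemma quasi_hermite_RNS y :
  (forall j l, is_length (H j) l ->
     exists2 n, (l < n)%N & y l + \sum_(k < n) H j (s k) * y (s k) = 0) ->
  RNS H y.
Proof.
move=> hy j; have [K hK] := qhH.1 j; case: (supp_below_length hK) => [Hj0 | [l hl]].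
  by exists 0%N; split=> [k _|]; rewrite ?big_ord0.
have [n ln yl0] := hy j l hl.
exists l.+1; split; first by move=> k; apply: hl.2.
by rewrite -/(dot (H j) y l.+1) (dot_quasi_hermite_row y hl ln).
Qed.

Variable xi : nat -> oseq C.
Hypothesis xi_s : forall k, xi (s k) (s k) = 1.
Hypothesis xi_length : forall k j l, is_length (H j) l -> xi (s k) l = - H j (s k).
Hypothesis xi_off : forall k k', k <> k' -> xi (s k) (s k') = 0.

Lemma RNS_xi k : RNS H (xi (s k)).
Proof.
apply: quasi_hermite_RNS => j l hl; exists (maxn l k).+1; first by rewrite ltnS leq_maxl.
rewrite (@sum_delta _ (fun k' => H j (s k')) (fun k' => xi (s k) (s k')) k) ?ltnS ?leq_maxr //.
  by rewrite (xi_length k hl) addNr.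
by move=> k' ne; apply: xi_off => ek; rewrite ek in ne.
Qed.

Lemma xi_partial_sum_s (z : nat -> C) m n :
  (m < n)%N -> \sum_(k < n) z k * xi (s k) (s m) = z m.
Proof. by move=> mn; apply: (@sum_delta _ z (fun k => xi (s k) (s m))) => // k; apply: xi_off. Qed.

Lemma xi_expansion_eventually x t : RNS H x ->
  exists N, forall n, (N <= n)%N -> \sum_(k < n) x (s k) * xi (s k) t = x t.
Proof.
move=> hx; case: (s_or_length t) => [[m <-] | [j hl]].
  by exists m.+1 => n; apply: (xi_partial_sum_s (fun k => x (s k))).
exists t.+1 => n tn; rewrite (RNS_quasi_hermite_length hx hl tn) -sumrN.
by apply: eq_bigr => k _; rewrite (xi_length k hl) mulrN mulrC.
Qed.

End QuasiHermiteNullSpace.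

Unset Implicit Arguments.

Theorem theorem6 (C : numClosedFieldType) (A Q H : omat C)
  (s : nat -> nat) (xi : nat -> oseq C) :
  row_finite A ->
  infinite_deficiency A ->
  nonsingular Q ->
  is_prod H Q A ->
  quasi_hermite H ->
  (forall k, (s k < s k.+1)%N) ->
  (forall t, (exists k, s k = t) <-> ~ (exists j, is_length (H j) t)) ->
  (forall k, xi (s k) (s k) = 1) ->
  (forall k j l, is_length (H j) l -> xi (s k) l = - H j (s k)) ->
  (forall k k', k <> k' -> xi (s k) (s k') = 0) ->
  (forall k, RNS A (xi (s k))) /\
  (forall x, RNS A x ->
     cvg_s (fun n => fun t => \sum_(k < n) x (s k) * xi (s k) t) x) /\
  (forall x (z : nat -> C), RNS A x ->
     cvg_s (fun n => fun t => \sum_(k < n) z k * xi (s k) t) x ->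
     forall k, z k = x (s k)).
Proof.
(* Infinite deficiency only makes S infinite, which the enumeration [s] already
   provides. *)
move=> rfA _ nsQ hHQA qhH s_incr s_compl xi_s xi_length xi_off.
have RNS_AH y : RNS A y <-> RNS H y := RNS_nonsingular y rfA nsQ hHQA.
split; [|split].
- move=> k; apply/RNS_AH.
  exact: (RNS_xi qhH s_incr s_compl xi_s xi_length xi_off k).
- move=> x /RNS_AH hx t; apply: cvg_eventually.
  exact: (xi_expansion_eventually qhH s_incr s_compl xi_s xi_length xi_off t hx).
- move=> x z _ hz k; apply: (cvg_eventually_uniq (hz (s k))).
  by exists k.+1 => n; apply: (xi_partial_sum_s xi_s xi_off z).
Qed.
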